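(* Let $A\in\mathbb{R}^{r\times n}$ ($r\le n$) have full row rank with singular values $\sigma_1\ge\dots\ge\sigma_r>0$, let $F\in\mathbb{R}^{K\times n}$ satisfy $FA^T\neq 0$, and let $D^*=FA^T(AA^T)^{-1}$. Define the spectral risk $\gamma=\|D^*\|_F^2\|A\|_F^2/\|D^*A\|_F^2$ and $\tilde\sigma_i^2=\sigma_i^2/\sum_{j=1}^r\sigma_j^2$. Then $\gamma\ge1$ and $$1\le\frac{1}{\tilde\sigma_1^2}\le\gamma\le\frac{1}{\tilde\sigma_r^2}.$$ Moreover $\gamma=1$ if and only if $r=1$.
   Context: $D^*$ is the minimizer of the linear regression problem $\min_D\|F-DA\|_F^2$; $F$ is an arbitrary target matrix. *)

From mathcomp Require Import all_boot all_order all_algebra.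
From mathcomp Require Import reals.
Set Implicit Arguments. Unset Strict Implicit. Unset Printing Implicit Defensive.
Import Order.TTheory GRing.Theory Num.Theory.
Local Open Scope ring_scope.

Definition frob2 (R : realType) (m n : nat) (M : 'M[R]_(m, n)) : R :=
  \sum_(i < m) \sum_(j < n) M i j ^+ 2.

Definition rdiag (R : realType) (m n : nat) (s : seq R) : 'M[R]_(m, n) :=
  \matrix_(i < m, j < n) (if (i : nat) == j then s`_i else 0).

Definition singular_values (R : realType) (r n : nat) (A : 'M[R]_(r, n))
    (s : seq R) : Prop :=
  [/\ size s = r, sorted (fun x y => y <= x) s, all (fun x => 0 <= x) s &
      exists (U : 'M[R]_r) (V : 'M[R]_n),
        [/\ U *m U^T = 1%:M, V *m V^T = 1%:M & A = U *m rdiag r n s *m V^T]].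

Definition Dstar (R : realType) (K r n : nat) (F : 'M[R]_(K, n))
    (A : 'M[R]_(r, n)) : 'M[R]_(K, r) :=
  F *m A^T *m invmx (A *m A^T).

Definition spectral_risk (R : realType) (K r n : nat) (F : 'M[R]_(K, n))
    (A : 'M[R]_(r, n)) : R :=
  let D := Dstar F A in frob2 D * frob2 A / frob2 (D *m A).

(* normalized squared singular value tilde sigma_i^2 (0-based index i) *)
Definition nsv2 (R : realType) (s : seq R) (i : nat) : R :=
  s`_i ^+ 2 / \sum_(x <- s) x ^+ 2.

From mathcomp Require Import all_boot all_order all_algebra.
From mathcomp Require Import reals.
From mathcomp Require Import ring lra.
Set Implicit Arguments.
Unset Strict Implicit.
Unset Printing Implicit Defensive.
Import Order.TTheory GRing.Theory Num.Theory.
Local Open Scope ring_scope.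

(* Write A = U S V^T.  Orthogonal factors do not change Frobenius norms, so
   with G = D* U we get ||D*||^2 = ||G||^2, ||A||^2 = sum_i sigma_i^2 and
   ||D* A||^2 = sum_(k,i) G_ki^2 sigma_i^2.  The last sum lies between
   sigma_r^2 ||G||^2 and sigma_1^2 ||G||^2, which gives the two bounds on
   gamma.  If r >= 2 then sum_i sigma_i^2 > sigma_1^2, so gamma > 1; if r = 1
   both bounds equal 1. *)

Lemma ler_div_sandwich (R : realFieldType) (lo hi a b S : R) :
  0 < lo -> 0 < a -> 0 <= S -> lo * a <= b -> b <= hi * a ->
  S / hi <= a * S / b <= S / lo.
Proof.
move=> lo_gt0 a_gt0 S_ge0 le_lo le_hi.
have b_gt0 : 0 < b by apply: lt_le_trans le_lo; rewrite mulr_gt0.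
have hi_gt0 : 0 < hi by rewrite -(pmulr_lgt0 _ a_gt0); apply: lt_le_trans le_hi.
apply/andP; split; rewrite ler_pdivrMr // mulrAC ler_pdivlMr //; nra.
Qed.

Lemma nsv2_inv_ge1 (R : realType) (s : seq R) i :
  s`_i != 0 -> 1 <= (nsv2 s i)^-1.
Proof.
move=> si_neq0; have lt_i : (i < size s)%N.
  by rewrite ltnNge; apply: contraNN si_neq0 => /(nth_default 0) ->.
rewrite /nsv2 invf_div ler_pdivlMr ?exprn_even_gt0 // mul1r.
rewrite (big_nth 0) big_mkord (bigD1 (Ordinal lt_i)) //= lerDl.
by apply: sumr_ge0 => j _; apply: sqr_ge0.
Qed.

Lemma nsv2_inv_eq1 (R : realType) (s : seq R) :
  all (fun x => x != 0) s -> (nsv2 s 0)^-1 = 1 <-> size s = 1%N.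
Proof.
case: s => [_|x t /= /andP [x_neq0 t_neq0]].
  rewrite /nsv2 big_nil invr0 mulr0 invr0.
  by split=> // /eqP; rewrite eq_sym oner_eq0.
have x2_neq0 : x ^+ 2 != 0 by rewrite expf_neq0.
rewrite /nsv2 big_cons /= invf_div mulrDl divff //.
have -> : (size t).+1 = 1%N <-> t = [::] by case: t {t_neq0}.
split=> [/eqP|->]; last by rewrite big_nil mul0r addr0.
rewrite -[X in _ == X]addr0 (inj_eq (addrI _)) mulf_eq0 invr_eq0.
rewrite (negPf x2_neq0) orbF.
rewrite psumr_eq0 => [|y _]; last exact: sqr_ge0.
by case: t t_neq0 => //= y t /andP [y_neq0 _]; rewrite sqrf_eq0 (negPf y_neq0).
Qed.

Section Frobenius.
Variable R : realType.
Implicit Types m n K : nat.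

Lemma frob2_tr m n (M : 'M[R]_(m, n)) : frob2 M = \tr (M *m M^T).
Proof.
rewrite /frob2 /mxtrace; apply: eq_bigr => i _; rewrite mxE.
by apply: eq_bigr => j _; rewrite !mxE expr2.
Qed.

Lemma frob2_ge0 m n (M : 'M[R]_(m, n)) : 0 <= frob2 M.
Proof. by apply: sumr_ge0 => i _; apply: sumr_ge0 => j _; apply: sqr_ge0. Qed.

Lemma frob2_gt0 m n (M : 'M[R]_(m, n)) : M != 0 -> 0 < frob2 M.
Proof.
move=> M_neq0; rewrite lt_def frob2_ge0 andbT; apply: contra M_neq0 => /eqP M0.
have row0 := psumr_eq0P (fun i _ => sumr_ge0 _ (fun j _ => sqr_ge0 (M i j))) M0.
apply/eqP/matrixP => i j; rewrite mxE; apply/eqP.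
by rewrite -sqrf_eq0 (psumr_eq0P (fun j _ => sqr_ge0 (M i j)) (row0 i isT)).
Qed.

Lemma frob2_mulmx_orthor m n (M : 'M[R]_(m, n)) (Q : 'M[R]_n) :
  Q *m Q^T = 1%:M -> frob2 (M *m Q) = frob2 M.
Proof.
by move=> QQT; rewrite !frob2_tr trmx_mul mulmxA -(mulmxA M) QQT mulmx1.
Qed.

Lemma frob2_orthol_mulmx m n (P : 'M[R]_m) (M : 'M[R]_(m, n)) :
  P^T *m P = 1%:M -> frob2 (P *m M) = frob2 M.
Proof.
move=> PTP; rewrite !frob2_tr trmx_mul mulmxA mxtrace_mulC mulmxA.
by rewrite (mulmxA P^T) PTP mul1mx.
Qed.

Definition frob2w m n (M : 'M[R]_(m, n)) (w : 'I_n -> R) : R :=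
  \sum_(i < m) \sum_(j < n) M i j ^+ 2 * w j.

Lemma frob2w_cst m n (M : 'M[R]_(m, n)) (c : R) :
  frob2w M (fun=> c) = c * frob2 M.
Proof.
rewrite /frob2w /frob2 mulr_sumr; apply: eq_bigr => i _.
by rewrite mulr_sumr; apply: eq_bigr => j _; rewrite mulrC.
Qed.

Lemma ler_frob2w m n (M : 'M[R]_(m, n)) (w1 w2 : 'I_n -> R) :
  (forall j, w1 j <= w2 j) -> frob2w M w1 <= frob2w M w2.
Proof.
move=> le_w; apply: ler_sum => i _; apply: ler_sum => j _.
by apply: ler_wpM2l; [apply: sqr_ge0 | apply: le_w].
Qed.

Lemma rdiag_mul_tr r n (s : seq R) : (r <= n)%N ->
  rdiag r n s *m (rdiag r n s)^T = diag_mx (\row_(i < r) s`_i ^+ 2).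
Proof.
move=> le_rn; apply/matrixP => i j; rewrite !mxE.
have lt_in : (i < n)%N by apply: leq_trans (ltn_ord i) le_rn.
rewrite (bigD1 (Ordinal lt_in)) //= big1 ?addr0 => [|l /eqP l_neq_i].
  rewrite !mxE /= eqxx; case: (eqVneq i j) => [<-|i_neq_j].
    by rewrite eqxx mulr1n expr2.
  rewrite mulr0n; case: eqP => [/val_inj ij|]; last by rewrite mulr0.
  by rewrite ij eqxx in i_neq_j.
rewrite !mxE; case: eqP => [il|]; last by rewrite mul0r.
by case: l_neq_i; apply: val_inj; rewrite /= il.
Qed.

Lemma frob2_rdiag r n (s : seq R) : (r <= n)%N ->
  frob2 (rdiag r n s) = \sum_(i < r) s`_i ^+ 2.
Proof.
move=> le_rn; rewrite frob2_tr rdiag_mul_tr // mxtrace_diag.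
by apply: eq_bigr => i _; rewrite mxE.
Qed.

Lemma frob2_mulmx_rdiag K r n (M : 'M[R]_(K, r)) (s : seq R) : (r <= n)%N ->
  frob2 (M *m rdiag r n s) = frob2w M (fun i => s`_i ^+ 2).
Proof.
move=> le_rn; rewrite frob2_tr trmx_mul mulmxA -(mulmxA M) rdiag_mul_tr //.
rewrite mul_mx_diag /mxtrace; apply: eq_bigr => k _; rewrite mxE.
by apply: eq_bigr => i _; rewrite !mxE expr2; ring.
Qed.

End Frobenius.

Section SVD.
Variables (R : realType) (r n : nat) (A : 'M[R]_(r, n)) (s : seq R).
Variables (U : 'M[R]_r) (V : 'M[R]_n).
Hypotheses (le_rn : (r <= n)%N) (UUT : U *m U^T = 1%:M) (VVT : V *m V^T = 1%:M).
Hypothesis A_svd : A = U *m rdiag r n s *m V^T.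

Lemma frob2_svd : frob2 A = \sum_(i < r) s`_i ^+ 2.
Proof.
rewrite A_svd frob2_mulmx_orthor ?trmxK ?(mulmx1C VVT) //.
by rewrite frob2_orthol_mulmx ?(mulmx1C UUT) // frob2_rdiag.
Qed.

Lemma frob2_mulmx_svd K (D : 'M[R]_(K, r)) :
  frob2 (D *m A) = frob2w (D *m U) (fun i => s`_i ^+ 2).
Proof.
rewrite A_svd !mulmxA frob2_mulmx_orthor ?trmxK ?(mulmx1C VVT) //.
exact: frob2_mulmx_rdiag.
Qed.

Lemma mul_tr_svd : A *m A^T = U *m diag_mx (\row_(i < r) s`_i ^+ 2) *m U^T.
Proof.
rewrite A_svd !trmx_mul trmxK -(rdiag_mul_tr s le_rn) !mulmxA.
by rewrite -(mulmxA _ V^T V) (mulmx1C VVT) mulmx1.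
Qed.

Lemma unitmx_mul_tr_svd : (forall i : 'I_r, s`_i != 0) -> A *m A^T \in unitmx.
Proof.
move=> s_neq0; have [U_unit UT_unit] := mulmx1_unit UUT.
rewrite mul_tr_svd !unitmx_mul U_unit UT_unit andbT /=.
rewrite unitmxE det_diag unitfE; apply/prodf_neq0 => i _.
by rewrite mxE expf_neq0.
Qed.

End SVD.

Section SingularValues.
Variables (R : realType) (r n : nat) (A : 'M[R]_(r, n)) (s : seq R).
Hypotheses (le_rn : (r <= n)%N) (svA : singular_values A s).

Lemma singular_values_antitone i j : (i <= j < r)%N -> s`_j <= s`_i.
Proof.
case: svA => size_s sorted_s _ _ /andP [le_ij lt_jr].
have ge_trans : transitive (fun x y : R => y <= x).
  by move=> y x z le_yx le_zy; apply: le_trans le_zy le_yx.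
apply: (sorted_leq_nth ge_trans (@lexx _ _) 0 sorted_s) => //.
  by rewrite inE size_s (leq_ltn_trans le_ij).
by rewrite inE size_s.
Qed.

Lemma singular_values_sqr_antitone i j :
  (i <= j < r)%N -> s`_j ^+ 2 <= s`_i ^+ 2.
Proof.
move=> ij; have [size_s _ /(all_nthP 0) s_ge0 _] := svA.
have /andP [le_ij lt_jr] := ij.
by rewrite ler_sqr ?nnegrE ?singular_values_antitone ?s_ge0 ?size_s
  ?(leq_ltn_trans le_ij lt_jr).
Qed.

Lemma frob2_singular_values : frob2 A = \sum_(x <- s) x ^+ 2.
Proof.
case: svA => size_s _ _ [U [V [UUT VVT A_svd]]].
by rewrite (frob2_svd le_rn UUT VVT A_svd) (big_nth 0) size_s big_mkord.
Qed.

Lemma frob2_mulmx_le_sv_max K (D : 'M[R]_(K, r)) :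
  frob2 (D *m A) <= s`_0 ^+ 2 * frob2 D.
Proof.
case: svA => _ _ _ [U [V [UUT VVT A_svd]]].
rewrite (frob2_mulmx_svd le_rn VVT A_svd) -(frob2_mulmx_orthor D UUT).
rewrite -frob2w_cst; apply: ler_frob2w => i /=.
by rewrite singular_values_sqr_antitone ?leq0n ?ltn_ord.
Qed.

Lemma frob2_mulmx_ge_sv_min K (D : 'M[R]_(K, r)) :
  s`_r.-1 ^+ 2 * frob2 D <= frob2 (D *m A).
Proof.
case: svA => _ _ _ [U [V [UUT VVT A_svd]]].
rewrite (frob2_mulmx_svd le_rn VVT A_svd) -(frob2_mulmx_orthor D UUT).
rewrite -frob2w_cst; apply: ler_frob2w => i.
apply: singular_values_sqr_antitone.
by rewrite -ltnS (ltn_predK (ltn_ord i)) ltn_ord leqnn.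
Qed.

Hypothesis sv_last_gt0 : 0 < s`_r.-1.

Lemma singular_values_gt0 i : (i <= r.-1)%N -> 0 < s`_i.
Proof.
move=> le_ir; apply: lt_le_trans sv_last_gt0 _.
apply: singular_values_antitone; rewrite le_ir /=.
case: svA => size_s _ _ _; rewrite ltnNge; apply: contraTN sv_last_gt0 => le_r.
by rewrite nth_default ?size_s ?ltxx.
Qed.

Lemma singular_values_neq0 : all (fun x => x != 0) s.
Proof.
case: svA => size_s _ _ _; apply/(all_nthP 0) => i; rewrite size_s => lt_ir.
by rewrite gt_eqF // singular_values_gt0 // -ltnS (ltn_predK lt_ir).
Qed.

Lemma unitmx_mul_tr : A *m A^T \in unitmx.
Proof.
case: svA => _ _ _ [U [V [UUT VVT A_svd]]].
apply: (unitmx_mul_tr_svd le_rn UUT VVT A_svd) => i.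
by rewrite gt_eqF // singular_values_gt0 // -ltnS (ltn_predK (ltn_ord i)).
Qed.

Lemma frob2_ratio_nsv2 K (D : 'M[R]_(K, r)) : D != 0 ->
  (nsv2 s 0)^-1 <= frob2 D * frob2 A / frob2 (D *m A) <= (nsv2 s r.-1)^-1.
Proof.
move=> D_neq0; rewrite /nsv2 !invf_div -frob2_singular_values.
apply: ler_div_sandwich; rewrite ?exprn_gt0 ?frob2_gt0 ?frob2_ge0 //.
- exact: frob2_mulmx_ge_sv_min.
- exact: frob2_mulmx_le_sv_max.
Qed.

End SingularValues.





Lemma Dstar_neq0 (R : realType) K r n (F : 'M[R]_(K, n)) (A : 'M[R]_(r, n)) :
  A *m A^T \in unitmx -> F *m A^T != 0 -> Dstar F A != 0.
Proof.
move=> AAT_unit; apply: contraNneq => D0.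
by rewrite -(mulmxKV AAT_unit (F *m A^T)) -/(Dstar F A) D0 mul0mx.
Qed.

Theorem proposition4 (R : realType) (K r n : nat)
    (A : 'M[R]_(r, n)) (F : 'M[R]_(K, n)) (s : seq R) :
  (r <= n)%N -> \rank A = r ->
  singular_values A s -> 0 < s`_r.-1 ->
  F *m A^T != 0 ->
  let gamma := spectral_risk F A in
  [/\ 1 <= gamma,
      1 <= (nsv2 s 0)^-1,
      (nsv2 s 0)^-1 <= gamma,
      gamma <= (nsv2 s r.-1)^-1 &
      (gamma = 1 <-> r = 1%N)].
Proof.
(* Full row rank is implied by the positivity of the smallest singular value. *)
move=> le_rn _ svA sv_last_gt0 FAT_neq0 gamma.
have D_neq0 := Dstar_neq0 (unitmx_mul_tr le_rn svA sv_last_gt0) FAT_neq0.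
have /andP [lo hi] := frob2_ratio_nsv2 le_rn svA sv_last_gt0 D_neq0.
have ge1 : 1 <= (nsv2 s 0)^-1.
  by apply: nsv2_inv_ge1; rewrite gt_eqF // (singular_values_gt0 svA).
have gamma_ge1 : 1 <= gamma := le_trans ge1 lo.
have [size_s _ _ _] := svA.
have nsv2_eq1 := nsv2_inv_eq1 (singular_values_neq0 svA sv_last_gt0).
split=> //; split=> [gamma1|r1].
- by rewrite -size_s; apply/nsv2_eq1/le_anti; rewrite ge1 -gamma1 lo.
- apply/le_anti; rewrite gamma_ge1 andbT.
  have r_pred0 : r.-1 = 0%N by rewrite r1.
  by move: hi; rewrite r_pred0 (nsv2_eq1.2 _) // size_s.
Qed.
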